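(* Let $n,q,m\ge1$ and let $S=\{v_1,\dots,v_m\}\subset\mathbb Z^n$ consist of distinct vectors satisfying: (1) $\sum_jn_jv_j\ne0$ for all $n_j\in\mathbb Z$ with $\sum_jn_j=0$ and $1<\sum_j|n_j|\le 2q+2$; (2) $|\sum_jn_jv_j|^2-\sum_jn_j|v_j|^2\ne0$ for all $n_j\in\mathbb Z$ with $\sum_jn_j=1$ and $1<\sum_j|n_j|\le2q+1$; (3) $\pi(u)\ne0$ whenever $u\in\mathbb Z^m$ is an element of $X_q$ or the sum or the difference of two distinct elements of $X_q$; (4) $2\sum_j\ell_j|v_j|^2+|\sum_j\ell_jv_j|^2\ne0$ for all $\ell\in X_q^{-2}$. Substitute into $H_{\rm Res}$ (restricted to $\{u_k=0,\ k\notin\mathrm{Span}(S)\}$) $u_k=z_k$ for $k\in S^c$ and $u_{v_i}=\sqrt{\xi_i+y_i}\,e^{ix_i}$, and expand in powers of $y,w$ (with $y$ of degree 2, $w=(z,\bar z)$ of degree 1, $x$ of degree 0). Then the sum of all terms of degree $\le2$ in $(y,w)$ equals $$\mathrm{const}(\xi)+(q+1)^2A_q(\xi)\Big(\sum_iy_i+\sum_{k\in S^c}|z_k|^2\Big)+N,$$ where $$N=(\omega(\xi),y)+\sum_{k\in S^c}|k|^2|z_k|^2+\mathcal Q(x,w),\qquad \omega(\xi)=\omega_0+\nabla_\xi A_{q+1}(\xi)-(q+1)^2A_q(\xi)\underline1,$$ $\omega_0=(|v_1|^2,\dots,|v_m|^2)$, $\underline1=(1,\dots,1)$, and $$\mathcal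 Q=\sum_{\ell\in X_q^0}c(\ell)e^{i(\ell,x)}\sum_{(h,k)\in\mathcal P_\ell}z_h\bar z_k+\sum_{\ell\in X_q^{-2}}c(\ell)\sum_{\{h,k\}\in\mathcal P_\ell}\big[e^{i(\ell,x)}z_hz_k+e^{-i(\ell,x)}\bar z_h\bar z_k\big],$$ where, writing $\ell=\ell^+-\ell^-$ with $\ell^\pm\in\mathbb N^m$ of disjoint supports and using multi-index notation, $$c(\ell)=(q+1)^2\xi^{\frac{\ell^++\ell^-}{2}}\sum_{\alpha\in\mathbb N^m,\ |\alpha+\ell^+|_1=q}\binom{q}{\ell^++\alpha}\binom{q}{\ell^-+\alpha}\xi^\alpha\quad(\ell\in X_q^0),$$ $$c(\ell)=(q+1)q\,\xi^{\frac{\ell^++\ell^-}{2}}\sum_{\alpha\in\mathbb N^m,\ |\alpha+\ell^+|_1=q-1}\binom{q+1}{\ell^-+\alpha}\binom{q-1}{\ell^++\alpha}\xi^\alpha\quad(\ell\in X_q^{-2}).$$ In particular, all terms of degree exactly $1$ in $w$ vanish (so $S$ is complete).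
   Context: Setting: $H_{\rm Res}=\sum_{k\in\mathbb Z^n}|k|^2u_k\bar u_k+\sum\binom{q+1}{\alpha}\binom{q+1}{\beta}u^\alpha\bar u^\beta$, the second sum over multi-indices $\alpha,\beta:\mathbb Z^n\to\mathbb N$ with $|\alpha|=|\beta|=q+1$, $\sum_k(\alpha_k-\beta_k)k=0$ and $\sum_k(\alpha_k-\beta_k)|k|^2=0$; $\binom{q+1}{\alpha}$ is the multinomial coefficient and $u^\alpha=\prod_ku_k^{\alpha_k}$. $S^c=\mathrm{Span}(S)\setminus S$, with $\mathrm{Span}(S)$ the subgroup of $\mathbb Z^n$ generated by $S$. $A_r(\xi)=\sum_{k\in\mathbb N^m,\ \sum k_i=r}\binom{r}{k_1,\dots,k_m}^2\prod_i\xi_i^{k_i}$. $e_1,\dots,e_m$ standard basis of $\mathbb Z^m$; $\eta(\sum a_ie_i)=\sum a_i$; $\pi:\mathbb Z^m\to\mathbb Z^n$, $\pi(e_i)=v_i$. $X_q$ is the set of $\ell=\sum_{j=1}^{2q}\epsilon_je_{i_j}$ ($\epsilon_j=\pm1$, repetitions allowed) with $\ell\ne0$, $\ell\ne-2e_i$ for all $i$, $\eta(\ell)\in\{0,-2\}$; $X_q^0$, $X_q^{-2}$ are the parts with $\eta=0$, $\eta=-2$. For $\ell\in X_q^0$, $\mathcal P_\ell$ is the set of ordered pairs $(h,k)\in S^c\times S^c$ with $\sum_j\ell_jv_j+h-k=0$ and $\sum_j\ell_j|v_j|^2+|h|^2-|k|^2=0$; for $\ell\in X_q^{-2}$, $\mathcal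 P_\ell$ is the set of unordered pairs $\{h,k\}\subset S^c$ with $\sum_j\ell_jv_j+h+k=0$ and $\sum_j\ell_j|v_j|^2+|h|^2+|k|^2=0$. Here $\xi_i>0$ are parameters, $x\in\mathbb T^m$, $y\in\mathbb C^m$ small. *)

From HB Require Import structures.
From mathcomp Require Import all_boot all_order all_algebra.
Set Implicit Arguments. Unset Strict Implicit. Unset Printing Implicit Defensive.
Import Order.TTheory GRing.Theory Num.Theory.
Local Open Scope ring_scope.

(* Vectors of Z^n are 'rV[int]_n; elements of Z^m (multi-indices over the
   index set {1..m} of S, e.g. l, n_j, u) are {ffun 'I_m -> int}. *)
Notation mi m := {ffun 'I_m -> int}.

Section Combinatorics.
Variables (n m : nat).
Implicit Types (k h : 'rV[int]_n) (l u : mi m).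

Definition sqnorm k : int := \sum_(j < n) (k 0 j) ^+ 2.

Variable v : 'I_m -> 'rV[int]_n.

Definition piZ u : 'rV[int]_n := \sum_(i < m) v i *~ u i.
Definition wsq u : int := \sum_(i < m) u i * sqnorm (v i).
Definition etaZ u : int := \sum_(i < m) u i.
Definition l1norm u : nat := (\sum_(i < m) `|u i|)%N.

Definition inSpan k := exists c : mi m, k = piZ c.
Definition inSc k := inSpan k /\ forall i, k <> v i.

Definition unitv (i : 'I_m) : mi m := [ffun j => ((i == j) : nat)%:Z].

Definition signed_sum (q : nat) l : bool :=
  [exists idx : {ffun 'I_(2 * q) -> 'I_m},
   exists eps : {ffun 'I_(2 * q) -> bool},
     l == \sum_(j < 2 * q) (if eps j then unitv (idx j) else - unitv (idx j))].

Definition Xq (q : nat) l : bool :=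
  [&& signed_sum q l, l != 0,
      [forall i, l != - (unitv i *+ 2)] &
      (etaZ l == 0) || (etaZ l == -2)].
Definition Xq0 q l : bool := Xq q l && (etaZ l == 0).
Definition Xqm2 q l : bool := Xq q l && (etaZ l == -2).

(* (h,k) in P_l for l in X_q^0 (ordered pair; h,k in S^c assumed separately) *)
Definition P0 l h k : bool :=
  (piZ l + h - k == 0) && (wsq l + sqnorm h - sqnorm k == 0).
Definition Pm2 l h k : bool :=
  (piZ l + h + k == 0) && (wsq l + sqnorm h + sqnorm k == 0).

End Combinatorics.

Section Analysis.
Variables (R : rcfType) (n m : nat) (v : 'I_m -> 'rV[int]_n) (xi : 'I_m -> R).

(* multinomial coefficient binom(r; k_1..k_m) (used only when sum k = r) *)
Definition mnom (r : nat) (k : 'I_m -> nat) : R :=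
  r`!%:R / \prod_(i < m) (k i)`!%:R.

Definition Apol (r : nat) : R :=
  \sum_(k : {ffun 'I_m -> 'I_r.+1} | (\sum_i (k i : nat) == r)%N)
     (mnom r (fun i => k i)) ^+ 2 * \prod_(i < m) xi i ^+ k i.

(* A_r as a univariate polynomial in the variable xi_j, other xi_i fixed *)
Definition Apol_in (r : nat) (j : 'I_m) : {poly R} :=
  \sum_(k : {ffun 'I_m -> 'I_r.+1} | (\sum_i (k i : nat) == r)%N)
     (mnom r (fun i => k i)) ^+ 2 *:
       ((\prod_(i < m | i != j) xi i ^+ k i)%:P * 'X^(k j)).

Definition dApol (r : nat) (j : 'I_m) : R := ((Apol_in r j)^`()).[xi j].

Definition omega (q : nat) (j : 'I_m) : R :=
  (sqnorm (v j))%:~R + dApol q.+1 j - (q.+1 ^ 2)%:R * Apol q.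

Definition lplus (l : mi m) (i : 'I_m) : nat := if 0 <= l i then `|l i|%N else 0%N.
Definition lminus (l : mi m) (i : 'I_m) : nat := if l i < 0 then `|l i|%N else 0%N.

Definition xi_half (l : mi m) : R := \prod_(i < m) Num.sqrt (xi i) ^+ `|l i|%N.

Definition c0 (q : nat) (l : mi m) : R :=
  (q.+1 ^ 2)%:R * xi_half l *
  \sum_(a : {ffun 'I_m -> 'I_q.+1} | (\sum_i (a i + lplus l i) == q)%N)
     mnom q (fun i => lplus l i + a i) * mnom q (fun i => lminus l i + a i)
     * \prod_(i < m) xi i ^+ a i.

Definition cm2 (q : nat) (l : mi m) : R :=
  (q.+1 * q)%:R * xi_half l *
  \sum_(a : {ffun 'I_m -> 'I_q.+1} | (\sum_i (a i + lplus l i) == q.-1)%N)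
     mnom q.+1 (fun i => lminus l i + a i) * mnom q.-1 (fun i => lplus l i + a i)
     * \prod_(i < m) xi i ^+ a i.

(* ---- Coefficients of the substituted Hamiltonian ----
   After substituting u_{v_i} = sqrt(xi_i + y_i) e^{i x_i}, u_k = z_k (k in S^c),
   u_k = 0 (k notin Span S), H_Res becomes a series in the monomials
     e^{i(l,x)} * y^gamma * prod_{h in ea} z_h * prod_{k in eb} zbar_k.
   [coefH q l ea eb yj] is the coefficient of such a monomial with
   y^gamma = 1 (yj = None) or y^gamma = y_j (yj = Some j); ea, eb are the
   lists (multisets) of points of S^c carrying z resp. zbar.
   A term u^alpha ubar^beta contributes with alpha = a on S (alpha_{v_i} = a_i),
   beta_{v_i} = a_i - l_i, and alpha, beta on S^c given by ea, eb; the factor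
   (xi_i+y_i)^{(alpha_{v_i}+beta_{v_i})/2} is Taylor expanded in y_i. *)

Definition multfact (e : seq 'rV[int]_n) : R :=
  \prod_(x <- undup e) (count_mem x e)`!%:R.

(* multinomial binom(q+1; alpha) for alpha = a on S and multiset e on S^c *)
Definition mnomE (r : nat) (a : 'I_m -> nat) (e : seq 'rV[int]_n) : R :=
  r`!%:R / (\prod_(i < m) (a i)`!%:R * multfact e).

Definition coefRes (q : nat) (l : mi m) (ea eb : seq 'rV[int]_n)
    (yj : option 'I_m) : R :=
  \sum_(a : {ffun 'I_m -> 'I_q.+2} |
        [&& [forall i, l i <= (a i : nat)%:Z],
            (\sum_i (a i : nat) + size ea == q.+1)%N,
            \sum_i ((a i : nat)%:Z - l i) + (size eb)%:Z == (q.+1)%:Z,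
            piZ v l + \sum_(h <- ea) h - \sum_(k <- eb) k == 0 &
            wsq v l + \sum_(h <- ea) sqnorm h - \sum_(k <- eb) sqnorm k == 0])
    let b : 'I_m -> nat := fun i => `|(a i : nat)%:Z - l i|%N in
    mnomE q.+1 (fun i => a i) ea * mnomE q.+1 b eb *
    let P := \prod_(i < m) Num.sqrt (xi i) ^+ (a i + b i) in
    match yj with
    | None => P
    | Some j => ((a j + b j)%:R / 2%:R) * P / xi j
    end.

(* contribution of sum_k |k|^2 u_k ubar_k *)
Definition coefQuad (l : mi m) (ea eb : seq 'rV[int]_n) (yj : option 'I_m) : R :=
  if l == 0 then
    match ea, eb, yj with
    | [::], [::], None => \sum_(i < m) (sqnorm (v i))%:~R * xi i
    | [::], [::], Some j => (sqnorm (v j))%:~R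
    | [:: h], [:: k], None => if h == k then (sqnorm h)%:~R else 0
    | _, _, _ => 0
    end
  else 0.

Definition coefH (q : nat) (l : mi m) (ea eb : seq 'rV[int]_n) (yj : option 'I_m) : R :=
  coefQuad l ea eb yj + coefRes q l ea eb yj.

End Analysis.

From HB Require Import structures.
From mathcomp Require Import all_boot all_order all_algebra.
From Stdlib Require Import FunctionalExtensionality.
From mathcomp Require Import zify ring lra.
Import Order.TTheory GRing.Theory Num.Theory.
Local Open Scope ring_scope.
Set Implicit Arguments. Unset Strict Implicit. Unset Printing Implicit Defensive.

(* A coefficient of H_Res is a finite sum over the exponents a of the u_{v_i}
   (those of their conjugates being a - l), and an exponent contributes to
   e^{i(l,x)} z^ea zbar^eb only under momentum and energy balance:
   pi(l) + sum ea - sum eb = 0, and the same with squared norms.  Counting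
   degrees fixes eta(l) and bounds |l|_1 by 2(q+1), so for the constant and
   linear monomials these balances are short integer relations among the v_j,
   forbidden by (1) and (2); for the quadratic ones they are exactly the
   conditions defining X_q and P_l, condition (4) making the two points of a
   zz-pair distinct.  On the surviving terms the substitution a = l^+ + alpha
   produces the sums defining c(l), and at l = 0 the y_j-coefficient is the
   xi_j-derivative of A_{q+1}.  Conjugation (l, ea, eb) -> (-l, eb, ea) reduces
   the zbar zbar terms to the z z ones. *)

Lemma Posz_sum (I : Type) (r : seq I) (P : pred I) (F : I -> nat) :
  (\sum_(i <- r | P i) F i)%N%:Z = \sum_(i <- r | P i) (F i)%:Z.
Proof. by rewrite -natz natr_sum; apply: eq_bigr => i _; rewrite natz. Qed.

Lemma leq_summand (I : finType) (F : I -> nat) i : (F i <= \sum_j F j)%N.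
Proof. by rewrite (bigD1 i) //= leq_addr. Qed.

Lemma big_ffun_ord_reindex (V : nmodType) (m N1 N2 : nat)
    (P1 P2 : ('I_m -> nat) -> bool) (F1 F2 : ('I_m -> nat) -> V)
    (h k : ('I_m -> nat) -> ('I_m -> nat)) :
  (forall f, P2 f -> (forall i, (f i <= N2)%N) ->
     [/\ P1 (h f), k (h f) = f, forall i, (h f i <= N1)%N & F1 (h f) = F2 f]) ->
  (forall g, P1 g -> (forall i, (g i <= N1)%N) ->
     [/\ P2 (k g), h (k g) = g & forall i, (k g i <= N2)%N]) ->
  \sum_(g : {ffun 'I_m -> 'I_N1.+1} | P1 (fun i => g i)) F1 (fun i => g i) =
  \sum_(f : {ffun 'I_m -> 'I_N2.+1} | P2 (fun i => f i)) F2 (fun i => f i).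
Proof.
move=> hP2 kP1.
pose H (f : {ffun 'I_m -> 'I_N2.+1}) : {ffun 'I_m -> 'I_N1.+1} :=
  [ffun i => inord (h (fun i => f i) i)].
pose K (g : {ffun 'I_m -> 'I_N1.+1}) : {ffun 'I_m -> 'I_N2.+1} :=
  [ffun i => inord (k (fun i => g i) i)].
have bd1 (g : {ffun 'I_m -> 'I_N1.+1}) i : (g i <= N1)%N by rewrite -ltnS.
have bd2 (f : {ffun 'I_m -> 'I_N2.+1}) i : (f i <= N2)%N by rewrite -ltnS.
have valH (f : {ffun 'I_m -> 'I_N2.+1}) :
    P2 (fun i => f i) -> (fun i => nat_of_ord (H f i)) = h (fun i => f i).
  move=> P2f; apply: functional_extensionality => i; rewrite ffunE inordK //.
  by case: (hP2 _ P2f (bd2 f)) => _ _ /(_ i); rewrite ltnS.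
have valK (g : {ffun 'I_m -> 'I_N1.+1}) :
    P1 (fun i => g i) -> (fun i => nat_of_ord (K g i)) = k (fun i => g i).
  move=> P1g; apply: functional_extensionality => i; rewrite ffunE inordK //.
  by case: (kP1 _ P1g (bd1 g)) => _ _ /(_ i); rewrite ltnS.
have ffun_ord_inj N (f g : {ffun 'I_m -> 'I_N}) :
    (fun i => nat_of_ord (f i)) = (fun i => nat_of_ord (g i)) -> f = g.
  by move=> e; apply/ffunP => i; apply/val_inj; exact: (congr1 (fun F => F i) e).
have P2E (f : {ffun 'I_m -> 'I_N2.+1}) :
    (P1 (fun i => nat_of_ord (H f i)) && (K (H f) == f)) = P2 (fun i => f i).
  case P2f: (P2 (fun i => f i)).
    case: (hP2 _ P2f (bd2 f)) => P1h khf _ _.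
    by rewrite valH // P1h; apply/eqP/ffun_ord_inj; rewrite valK valH ?khf.
  apply/negbTE/negP => /andP [P1h /eqP KHf].
  case: (kP1 _ P1h (bd1 _)) => P2k _ _.
  by move: P2k; rewrite -valK // KHf P2f.
rewrite (reindex_onto H K); last first.
  move=> g P1g; apply: ffun_ord_inj.
  by case: (kP1 _ P1g (bd1 g)) => P2k hk _; rewrite valH valK // hk.
apply: eq_big => f; first exact: P2E.
rewrite P2E => P2f; case: (hP2 _ P2f (bd2 f)) => _ _ _ <-.
by rewrite valH.
Qed.

Section IntVectors.
Variable n : nat.
Implicit Types x y : 'rV[int]_n.

Lemma sqnormN x : sqnorm (- x) = sqnorm x.
Proof. by apply: eq_bigr => j _; rewrite mxE sqrrN. Qed.

Lemma sqnorm_eq0 x : sqnorm x = 0 -> x = 0.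
Proof.
move/psumr_eq0P => x0; apply/matrixP => i j; rewrite ord1 mxE.
by apply/eqP; rewrite -sqrf_eq0; apply/eqP/x0 => // k _; exact: sqr_ge0.
Qed.

Lemma sqnorm_parallelogram x y :
  sqnorm (x - y) + sqnorm (x + y) = 2 * (sqnorm x + sqnorm y).
Proof.
rewrite /sqnorm -!big_split mulr_sumr; apply: eq_bigr => j _ /=.
by rewrite !mxE; ring.
Qed.

Lemma sqnorm_double x : sqnorm (x + x) = 4 * sqnorm x.
Proof. by rewrite /sqnorm mulr_sumr; apply: eq_bigr => j _; rewrite !mxE; ring. Qed.

Lemma double_inj x y : x + x = y + y -> x = y.
Proof.
move=> e; apply/matrixP => i j; have := congr1 (fun M : 'rV[int]_n => M i j) e.
rewrite !mxE => eij; apply/eqP; rewrite -subr_eq0.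
have : (x i j - y i j) * 2 == 0 by rewrite mulrBl !mulr_natr !mulr2n eij subrr.
by rewrite mulf_eq0 => /orP [].
Qed.

End IntVectors.

Section Lattice.
Variables (n m : nat) (v : 'I_m -> 'rV[int]_n).
Implicit Types (l u : mi m) (i : 'I_m).

Lemma unitvE (i j : 'I_m) : unitv i j = ((i == j) : nat)%:Z.
Proof. by rewrite ffunE. Qed.

Lemma piZ0 : piZ v 0 = 0.
Proof. by rewrite /piZ big1 // => i _; rewrite ffunE mulr0z. Qed.

Lemma piZN l : piZ v (- l) = - piZ v l.
Proof. by rewrite /piZ -sumrN; apply: eq_bigr => i _; rewrite ffunE mulrNz. Qed.

Lemma piZD l1 l2 : piZ v (l1 + l2) = piZ v l1 + piZ v l2.
Proof. by rewrite /piZ -big_split; apply: eq_bigr => i _; rewrite ffunE mulrzDr. Qed.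

Lemma piZ_unitv i : piZ v (unitv i) = v i.
Proof.
rewrite /piZ (bigD1 i) //= unitvE eqxx mulr1z big1 ?addr0 // => j ji.
by rewrite unitvE eq_sym (negbTE ji) mulr0z.
Qed.

Lemma wsq0 : wsq v 0 = 0.
Proof. by rewrite /wsq big1 // => i _; rewrite ffunE mul0r. Qed.

Lemma wsqN l : wsq v (- l) = - wsq v l.
Proof. by rewrite /wsq -sumrN; apply: eq_bigr => i _; rewrite ffunE mulNr. Qed.

Lemma wsqD l1 l2 : wsq v (l1 + l2) = wsq v l1 + wsq v l2.
Proof. by rewrite /wsq -big_split; apply: eq_bigr => i _; rewrite ffunE mulrDl. Qed.

Lemma wsq_unitv i : wsq v (unitv i) = sqnorm (v i).
Proof.
rewrite /wsq (bigD1 i) //= unitvE eqxx mul1r big1 ?addr0 // => j ji.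
by rewrite unitvE eq_sym (negbTE ji) mul0r.
Qed.

Lemma etaZ0 : etaZ (0 : mi m) = 0.
Proof. by rewrite /etaZ big1 // => i _; rewrite ffunE. Qed.

Lemma etaZN l : etaZ (- l) = - etaZ l.
Proof. by rewrite /etaZ -sumrN; apply: eq_bigr => i _; rewrite ffunE. Qed.

Lemma etaZD l1 l2 : etaZ (l1 + l2) = etaZ l1 + etaZ l2.
Proof. by rewrite /etaZ -big_split; apply: eq_bigr => i _; rewrite ffunE. Qed.

Lemma etaZ_unitv i : etaZ (unitv i) = 1.
Proof.
rewrite /etaZ (bigD1 i) //= unitvE eqxx big1 ?addr0 // => j ji.
by rewrite unitvE eq_sym (negbTE ji).
Qed.

Lemma l1normN l : l1norm (- l) = l1norm l.
Proof. by apply: eq_bigr => i _; rewrite ffunE abszN. Qed.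

Lemma l1norm_eq0 l : l1norm l = 0%N -> l = 0.
Proof.
move/eqP; rewrite /l1norm sum_nat_eq0 => /forallP l0.
by apply/ffunP => i; rewrite ffunE; apply/eqP; rewrite -absz_eq0; exact: l0.
Qed.

End Lattice.

Section PosNegParts.
Variable m : nat.
Implicit Types (l u : mi m) (i : 'I_m).

Lemma lplus_sub_lminus l i : (lplus l i)%:Z - (lminus l i)%:Z = l i.
Proof.
rewrite /lplus /lminus; case: (ltrP (l i) 0) => li0.
  by rewrite ltz0_abs // sub0r opprK.
by rewrite gez0_abs // subr0.
Qed.

Lemma lplus_add_lminus l i : (lplus l i + lminus l i)%N = `|l i|%N.
Proof. by rewrite /lplus /lminus; case: (ltrP (l i) 0); rewrite ?addn0. Qed.

Lemma ge_lplus l i : l i <= (lplus l i)%:Z.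
Proof.
rewrite /lplus; case: (ltrP (l i) 0) => li0; first exact: ltW.
by rewrite gez0_abs.
Qed.

Lemma lplus_leq l i (a : nat) : l i <= a%:Z -> (lplus l i <= a)%N.
Proof.
by rewrite /lplus; case: (ltrP (l i) 0) => // li0; rewrite -lez_nat gez0_abs.
Qed.

Lemma absz_lplus_add l i (a : nat) :
  `|(lplus l i + a)%:Z - l i|%N = (a + lminus l i)%N.
Proof.
apply/eqP; rewrite -eqz_nat gez0_abs -(lplus_sub_lminus l i) !PoszD.
  by apply/eqP; ring.
by lia.
Qed.

Lemma lplus0 i : lplus 0 i = 0%N.
Proof. by rewrite /lplus ffunE. Qed.

Lemma lminus0 i : lminus 0 i = 0%N.
Proof. by rewrite /lminus ffunE. Qed.

Lemma etaZ_lplus_lminus l :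
  etaZ l = (\sum_i lplus l i)%N%:Z - (\sum_i lminus l i)%N%:Z.
Proof.
by rewrite !Posz_sum -sumrB; apply: eq_bigr => i _; rewrite lplus_sub_lminus.
Qed.

Lemma l1norm_etaZ l : (l1norm l)%:Z = etaZ l + 2 * (\sum_i lminus l i)%N%:Z.
Proof.
rewrite /l1norm etaZ_lplus_lminus -(eq_bigr _ (fun i _ => lplus_add_lminus l i)).
by rewrite big_split PoszD; ring.
Qed.

Lemma l1norm1_unitv u : l1norm u = 1%N -> etaZ u = 1 -> exists i, u = unitv i.
Proof.
move=> u1 eta1.
have [i ui0] : exists i, `|u i|%N != 0%N.
  case: (pickP (fun i => `|u i|%N != 0%N)) => [i ui0 | u0]; first by exists i.
  by move: u1; rewrite /l1norm big1 // => i _; apply/eqP/negbFE/u0.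
move: u1; rewrite /l1norm (bigD1 i) //=.
set rest := (\sum_(j < m | j != i) _)%N => u1.
have : rest == 0%N by move: ui0 u1; clearbody rest; lia.
rewrite /rest sum_nat_eq0 => /forallP uj0.
have uj_eq0 j : j != i -> u j = 0.
  by move=> ji; apply/eqP; rewrite -absz_eq0; exact: (implyP (uj0 j) ji).
exists i; apply/ffunP => j; rewrite unitvE.
case: (eqVneq i j) => [<- | ij] /=; last by rewrite uj_eq0 // eq_sym.
by move: eta1; rewrite /etaZ (bigD1 i) //= big1 ?addr0 // => j ji; rewrite uj_eq0.
Qed.

End PosNegParts.

Section SignedSums.
Variable m : nat.

Definition mset_seq (a : 'I_m -> nat) : seq 'I_m :=
  flatten [seq nseq (a i) i | i <- index_enum 'I_m].

Lemma size_mset_seq a : size (mset_seq a) = (\sum_(i < m) a i)%N.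
Proof.
rewrite /mset_seq size_flatten sumnE /shape -map_comp big_map.
by apply: eq_bigr => i _ /=; rewrite size_nseq.
Qed.

Lemma sum_unitv_mset_seq a : \sum_(i <- mset_seq a) unitv i = [ffun i => (a i)%:Z].
Proof.
rewrite /mset_seq big_flatten big_map /=; apply/ffunP => j.
rewrite sum_ffunE ffunE (bigD1 j) //= big_nseq iter_addr_0 ffunMnE unitvE eqxx.
rewrite big1 ?addr0 ?natz // => i ij.
by rewrite big_nseq iter_addr_0 ffunMnE unitvE (negbTE ij) mul0rn.
Qed.

Definition signed_unitv (p : bool * 'I_m) : mi m :=
  if p.1 then unitv p.2 else - unitv p.2.

Lemma signed_sum_seq q (s : seq (bool * 'I_m)) (i0 : 'I_m) :
  size s = (2 * q)%N -> signed_sum q (\sum_(p <- s) signed_unitv p).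
Proof.
move=> size_s.
apply/existsP; exists [ffun j : 'I_(2 * q) => (nth (true, i0) s j).2].
apply/existsP; exists [ffun j : 'I_(2 * q) => (nth (true, i0) s j).1].
apply/eqP; under [RHS]eq_bigr do rewrite !ffunE.
rewrite -(big_mkord xpredT (fun j => signed_unitv (nth (true, i0) s j))) -size_s.
by rewrite (big_nth (true, i0)).
Qed.

Lemma signed_sum_diff q (a b : 'I_m -> nat) (l : mi m) (i0 : 'I_m) :
  (\sum_i a i + \sum_i b i = 2 * q)%N -> (forall i, l i = (a i)%:Z - (b i)%:Z) ->
  signed_sum q l.
Proof.
move=> sum_ab lE.
pose s := [seq (true, i) | i <- mset_seq a] ++ [seq (false, i) | i <- mset_seq b].
have -> : l = \sum_(p <- s) signed_unitv p.
  rewrite big_cat !big_map /signed_unitv /= sumrN !sum_unitv_mset_seq.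
  by apply/ffunP => i; rewrite !ffunE lE.
by apply: (signed_sum_seq i0); rewrite size_cat !size_map !size_mset_seq.
Qed.

End SignedSums.

Section Multinomials.
Variables (R : rcfType) (n m : nat).
Implicit Types (a : 'I_m -> nat) (h k : 'rV[int]_n).

Lemma mnomE_nil r a : mnomE R r a ([::] : seq 'rV[int]_n) = mnom R r a.
Proof. by rewrite /mnomE /mnom /multfact /= big_nil mulr1. Qed.

Lemma mnomE_seq1 r a h : mnomE R r.+1 a [:: h] = r.+1%:R * mnom R r a.
Proof.
by rewrite /mnomE /mnom /multfact /= big_seq1 /= eqxx mulr1 factS natrM mulrA.
Qed.

Lemma mnomE_seq2 r a h k : h != k ->
  mnomE R r.+2 a [:: h; k] = (r.+2 * r.+1)%:R * mnom R r a.
Proof.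
move=> hk; rewrite /mnomE /mnom /multfact /= inE (negbTE hk) /= big_cons big_seq1 /=.
rewrite eqxx (negbTE hk) eq_sym (negbTE hk) eqxx /= !mulr1.
by rewrite !factS !natrM !mulrA.
Qed.

End Multinomials.

Section Resonances.
Variables (R : rcfType) (n m : nat) (v : 'I_m -> 'rV[int]_n) (xi : 'I_m -> R) (q : nat).
Implicit Types (l : mi m) (ea eb : seq 'rV[int]_n) (a : 'I_m -> nat).

(* The exponents [a] of the u_{v_i} (and [a - l] of their conjugates) that
   produce the monomial e^{i(l,x)} z^ea zbar^eb in H_Res. *)
Definition res_support l ea eb a : bool :=
  [&& [forall i, l i <= (a i)%:Z], (\sum_i a i + size ea == q.+1)%N,
      \sum_i ((a i)%:Z - l i) + (size eb)%:Z == (q.+1)%:Z,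
      piZ v l + \sum_(h <- ea) h - \sum_(k <- eb) k == 0 &
      wsq v l + \sum_(h <- ea) sqnorm h - \sum_(k <- eb) sqnorm k == 0].

Definition res_term l ea eb (yj : option 'I_m) a : R :=
  let b i := `|(a i)%:Z - l i|%N in
  mnomE R q.+1 a ea * mnomE R q.+1 b eb *
  let P := \prod_(i < m) Num.sqrt (xi i) ^+ (a i + b i) in
  match yj with
  | None => P
  | Some j => ((a j + b j)%:R / 2%:R) * P / xi j
  end.

Lemma coefResE l ea eb yj : coefRes v xi q l ea eb yj =
  \sum_(a : {ffun 'I_m -> 'I_q.+2} | res_support l ea eb (fun i => a i))
    res_term l ea eb yj (fun i => a i).
Proof. by []. Qed.

Lemma coefRes_eq0 l ea eb yj :
  (forall a, ~ res_support l ea eb a) -> coefRes v xi q l ea eb yj = 0.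
Proof. by move=> noa; rewrite coefResE big_pred0 // => a; apply/negP/noa. Qed.

Lemma res_support_balance l ea eb a : res_support l ea eb a ->
  [/\ etaZ l = (size eb)%:Z - (size ea)%:Z,
      (l1norm l + size ea + size eb <= 2 * q.+1)%N,
      piZ v l + \sum_(h <- ea) h - \sum_(k <- eb) k = 0 &
      wsq v l + \sum_(h <- ea) sqnorm h - \sum_(k <- eb) sqnorm k = 0].
Proof.
case/and5P => /forallP la /eqP sa /eqP sb /eqP p /eqP w.
have {}sa : \sum_i (a i)%:Z + (size ea)%:Z = (q.+1)%:Z by rewrite -Posz_sum -sa.
rewrite sumrB in sb; split => //.
  by rewrite /etaZ; move: sa sb; set A := \sum_i (a i)%:Z; set E := \sum_i l i; lia.
have : (l1norm l)%:Z <= \sum_i (a i)%:Z + (\sum_i (a i)%:Z - \sum_i l i).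
  rewrite -sumrB -big_split /l1norm Posz_sum /=; apply: ler_sum => i _.
  by move: (la i); rewrite abszE; lia.
by move: sa sb; set A := \sum_i (a i)%:Z; set E := \sum_i l i; lia.
Qed.

Lemma res_support_signed l ea eb a : (0 < m)%N ->
  res_support l ea eb a -> (size ea + size eb = 2)%N -> signed_sum q l.
Proof.
move=> m_gt0 /and5P [/forallP la /eqP sa /eqP sb _ _] size2.
have bE i : (`|(a i)%:Z - l i|%N)%:Z = (a i)%:Z - l i by rewrite gez0_abs ?subr_ge0.
have {}sb : (\sum_i `|(a i)%:Z - l i|%N + size eb = q.+1)%N.
  apply/eqP; rewrite -eqz_nat PoszD Posz_sum -sb.
  by under eq_bigr do rewrite bE.
apply: (signed_sum_diff (a := a) (b := fun i => `|(a i)%:Z - l i|%N) (Ordinal m_gt0)).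
  by move: sa sb size2; set A := (\sum_i a i)%N; set B := (\sum_i _)%N; lia.
by move=> i; rewrite bE opprB addrC subrK.
Qed.

(* Complex conjugation exchanges z and zbar: b = a - l becomes the exponent
   of the u_{v_i} for the mode -l. *)
Lemma res_support_opp l ea eb a : res_support l ea eb a ->
  [/\ res_support (- l) eb ea (fun i => `|(a i)%:Z - l i|%N),
      (fun i => absz ((`|(a i)%:Z - l i|%N)%:Z + l i)%R) = a &
      forall i, (`|(a i)%:Z - l i|%N <= q.+1)%N].
Proof.
case/and5P => /forallP la /eqP sa /eqP sb /eqP p /eqP w.
have bE i : (`|(a i)%:Z - l i|%N)%:Z = (a i)%:Z - l i by rewrite gez0_abs ?subr_ge0.
have sb' : (\sum_i `|(a i)%:Z - l i|%N + size eb = q.+1)%N.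
  apply/eqP; rewrite -eqz_nat PoszD Posz_sum -sb.
  by under eq_bigr do rewrite bE.
split.
- apply/and5P; split.
  + by apply/forallP => i; rewrite ffunE bE -subr_ge0 opprK subrK.
  + exact/eqP.
  + apply/eqP; rewrite -sa PoszD Posz_sum; congr (_ + _); apply: eq_bigr => i _.
    by rewrite ffunE bE opprK subrK.
  + apply/eqP; rewrite -[RHS]oppr0 -{}[in RHS]p piZN.
    by rewrite opprB opprD addrA; congr (_ + _); rewrite addrC.
  + by apply/eqP; rewrite -[RHS]oppr0 -{}[in RHS]w wsqN; ring.
- apply: functional_extensionality => i; apply/eqP; rewrite -eqz_nat.
  by rewrite bE subrK gez0_abs.
- by move=> i; rewrite -sb'; exact: leq_trans (leq_summand _ i) (leq_addr _ _).
Qed.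

Lemma coefRes_opp l ea eb :
  coefRes v xi q l ea eb None = coefRes v xi q (- l) eb ea None.
Proof.
rewrite !coefResE.
apply: (@big_ffun_ord_reindex _ _ q.+1 q.+1 (res_support l ea eb)
  (res_support (- l) eb ea) (res_term l ea eb None) (res_term (- l) eb ea None)
  (fun f i => absz ((f i)%:Z + l i)%R) (fun g i => `|(g i)%:Z - l i|%N)).
- move=> f Pf _.
  have [P1 hk bd] := res_support_opp Pf.
  have fE : (fun i => `|(f i)%:Z - (- l) i|%N) = (fun i => absz ((f i)%:Z + l i)%R).
    by apply: functional_extensionality => i; rewrite ffunE opprK.
  rewrite fE opprK in P1.
  have hk' : (fun i => `|(absz ((f i)%:Z + l i)%R)%:Z - l i|%N) = f.
    apply: functional_extensionality => i; have /= := congr1 (fun F => F i) hk.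
    by rewrite !ffunE opprK.
  split => //; first by move=> i; move: (bd i); rewrite ffunE opprK.
  rewrite /res_term /= hk' fE [mnomE R q.+1 f eb * _]mulrC; congr (_ * _).
  apply: eq_bigr => i _; have /= -> := congr1 (fun F => F i) hk'.
  by rewrite ffunE opprK addnC.
- by move=> g Pg _; have [] := res_support_opp Pg.
Qed.

Lemma coefRes_shift l ea eb yj :
  (0 < size ea)%N -> (size ea <= q.+1)%N ->
  etaZ l = (size eb)%:Z - (size ea)%:Z ->
  piZ v l + \sum_(h <- ea) h - \sum_(k <- eb) k = 0 ->
  wsq v l + \sum_(h <- ea) sqnorm h - \sum_(k <- eb) sqnorm k = 0 ->
  coefRes v xi q l ea eb yj =
  \sum_(al : {ffun 'I_m -> 'I_q.+1} | (\sum_i (al i + lplus l i) == q.+1 - size ea)%N)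
     res_term l ea eb yj (fun i => (lplus l i + al i)%N).
Proof.
move=> ea_gt0 ea_le eta p w; rewrite coefResE.
apply: (@big_ffun_ord_reindex _ _ q.+1 q (res_support l ea eb)
  (fun al => (\sum_i (al i + lplus l i) == q.+1 - size ea)%N) (res_term l ea eb yj)
  (fun al => res_term l ea eb yj (fun i => (lplus l i + al i)%N))
  (fun al i => (lplus l i + al i)%N) (fun a i => (a i - lplus l i)%N)).
- move=> al /eqP sum_al al_le; split => //.
  + apply/and5P; split; [|apply/eqP..] => //.
    * by apply/forallP => i; rewrite PoszD; have := ge_lplus l i; lia.
    * by move: sum_al; under eq_bigr do rewrite addnC; move=> ->; rewrite subnK.
    * have -> : \sum_i ((lplus l i + al i)%N%:Z - l i) =
                (\sum_i al i)%N%:Z + (\sum_i lminus l i)%N%:Z.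
        rewrite !Posz_sum -big_split; apply: eq_bigr => i _ /=.
        by rewrite -(lplus_sub_lminus l i) PoszD; ring.
      move: sum_al eta; rewrite big_split /= etaZ_lplus_lminus.
      set A := (\sum_i al i)%N; set B := (\sum_i lplus l i)%N.
      set C := (\sum_i lminus l i)%N; clearbody A B C; lia.
  + by apply: functional_extensionality => i; rewrite addKn.
  + move=> i; apply: leq_trans (leq_summand (fun i => (lplus l i + al i)%N) i) _.
    by under eq_bigr do rewrite addnC; rewrite sum_al; lia.
- move=> a /and5P [/forallP la /eqP sa _ _ _] _.
  have le_a i : (lplus l i <= a i)%N by exact: lplus_leq.
  split.
  + apply/eqP; rewrite -sa addnK; apply: eq_bigr => i _; exact: subnK.
  + by apply: functional_extensionality => i; rewrite subnKC.
  + move=> i; apply: leq_trans (leq_subr _ _) _.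
    by have := leq_summand a i; move: sa ea_gt0; lia.
Qed.

Lemma res_term_None l ea eb (al : 'I_m -> nat) : (forall i, 0 <= xi i) ->
  res_term l ea eb None (fun i => (lplus l i + al i)%N) =
  mnomE R q.+1 (fun i => (lplus l i + al i)%N) ea *
  mnomE R q.+1 (fun i => (lminus l i + al i)%N) eb *
  (xi_half xi l * \prod_i xi i ^+ al i).
Proof.
move=> xi_ge0; rewrite /res_term.
have -> : (fun i => `|(lplus l i + al i)%N%:Z - l i|%N) = (fun i => (lminus l i + al i)%N).
  by apply: functional_extensionality => i; rewrite absz_lplus_add addnC.
congr (_ * _); rewrite /xi_half -big_split /=; apply: eq_bigr => i _.
rewrite -lplus_add_lminus absz_lplus_add.
have -> : (lplus l i + al i + (al i + lminus l i) = lplus l i + lminus l i + 2 * al i)%N.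
  by lia.
by rewrite exprD exprM sqr_sqrtr.
Qed.

End Resonances.

Lemma sqnorm_midpoint n (h k x : 'rV[int]_n) :
  h + k = x + x -> sqnorm h + sqnorm k = sqnorm x + sqnorm x -> h = x.
Proof.
move=> hk_sum hk_sq.
have := sqnorm_parallelogram h k; rewrite hk_sum hk_sq sqnorm_double => e.
have : sqnorm (h - k) = 0 by move: e; set s := sqnorm x; set t := sqnorm _; lia.
move/sqnorm_eq0/eqP; rewrite subr_eq0 => /eqP hk.
by apply: double_inj; rewrite -hk_sum hk.
Qed.

Section Coefficients.
Variables (R : rcfType) (n q m : nat) (v : 'I_m -> 'rV[int]_n) (xi : 'I_m -> R).
Hypothesis xi_gt0 : forall i, 0 < xi i.

Let xi_ge0 i : 0 <= xi i. Proof. exact: ltW. Qed.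

Section Constant.
Hypothesis no_short_relation : forall nn : mi m,
  etaZ nn = 0 -> (1 < l1norm nn <= 2 * q + 2)%N -> piZ v nn <> 0.

Lemma coefRes_const l yj : l <> 0 -> coefRes v xi q l [::] [::] yj = 0.
Proof.
move=> l0; apply: coefRes_eq0 => a /res_support_balance [eta len p _].
rewrite !big_nil /= !subr0 !addr0 in eta p; rewrite !addn0 in len.
apply: (no_short_relation eta _ p).
have := l1norm_etaZ l; rewrite eta add0r => l1E.
have : l1norm l <> 0%N by move/l1norm_eq0.
by move: len; rewrite mulnSr; lia.
Qed.

End Constant.

Section Linear.
Hypothesis no_short_resonance : forall nn : mi m,
  etaZ nn = 1 -> (1 < l1norm nn <= 2 * q + 1)%N -> sqnorm (piZ v nn) - wsq v nn <> 0.

(* A resonant relation of length one is h = v_i, which S^c excludes. *)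
Lemma Sc_nonresonant (nn : mi m) h : inSc v h -> etaZ nn = 1 ->
  (l1norm nn <= 2 * q + 1)%N -> h = piZ v nn -> sqnorm h - wsq v nn <> 0.
Proof.
move=> [_ h_notin_S] eta len hE.
case: (ltnP 1 (l1norm nn)) => [len_gt1 | len_le1].
  by rewrite hE; apply: no_short_resonance; rewrite ?len_gt1.
have := l1norm_etaZ nn; rewrite eta => l1E.
have [i nnE] := l1norm1_unitv (ltac:(lia) : l1norm nn = 1%N) eta.
by move: hE; rewrite nnE piZ_unitv => /h_notin_S.
Qed.

Lemma coefRes_linear l h yj : inSc v h ->
  coefRes v xi q l [:: h] [::] yj = 0 /\ coefRes v xi q l [::] [:: h] yj = 0.
Proof.
move=> hS; split; apply: coefRes_eq0 => a /res_support_balance [eta len p w];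
  rewrite !big_cons !big_nil /= in eta len p w; rewrite mulnSr in len.
- rewrite !addr0 !subr0 in p w.
  apply: (Sc_nonresonant (nn := - l) hS).
  + by rewrite etaZN eta sub0r opprK.
  + by rewrite l1normN; lia.
  + by apply/eqP; rewrite piZN -addr_eq0 addrC p.
  + by rewrite wsqN opprK addrC.
- rewrite !addr0 in p w.
  apply: (Sc_nonresonant (nn := l) hS).
  + by rewrite eta subr0.
  + by lia.
  + by apply/eqP; rewrite eq_sym -subr_eq0 p.
  + by apply/eqP; rewrite -oppr_eq0 opprB w.
Qed.

End Linear.

Lemma c0_0 : c0 xi q 0 = (q.+1 ^ 2)%:R * Apol xi q.
Proof.
rewrite /c0 /xi_half big1 ?mulr1; last by move=> i _; rewrite ffunE.
congr (_ * _); apply: eq_big => al.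
  by congr (_ == _); apply: eq_bigr => i _; rewrite lplus0 addn0.
move=> _; rewrite expr2; congr (_ * _ * _); congr (mnom _ _);
  by apply: functional_extensionality => i; rewrite ?lplus0 ?lminus0.
Qed.

(* The Taylor factor (a_j + b_j)/2 = a_j of sqrt(xi_j + y_j)^{2 a_j} is the
   exponent that differentiation of xi_j^{a_j} brings down. *)
Lemma coefRes_y j : coefRes v xi q 0 [::] [::] (Some j) = dApol xi q.+1 j.
Proof.
rewrite coefResE /dApol /Apol_in raddf_sum horner_sum.
apply: eq_big => a.
  rewrite /res_support piZ0 wsq0 !big_nil !addr0 !subr0 eqxx !andbT /= addn0.
  have -> : [forall i, (0 : mi m) i <= (a i)%:Z] by apply/forallP => i; rewrite ffunE.
  have -> : \sum_i ((a i)%:Z - (0 : mi m) i) = (\sum_i a i)%N%:Z.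
    by rewrite Posz_sum; apply: eq_bigr => i _; rewrite ffunE subr0.
  by rewrite eqz_nat andbb.
move=> _; rewrite /res_term /=.
have -> : (fun i => `|(a i)%:Z - ((0 : mi m) i)%R|%N) = (fun i => nat_of_ord (a i)).
  by apply: functional_extensionality => i; rewrite ffunE subr0.
rewrite !mnomE_nil derivZ hornerZ -expr2 -mulrA; congr (_ * _).
under eq_bigr do rewrite ffunE subr0 absz_nat addnn -mul2n exprM sqr_sqrtr //.
rewrite ffunE subr0 absz_nat addnn -mul2n.
rewrite deriv_mulC hornerCM derivXn hornerMn hornerXn (bigD1 j) //=.
have xj_neq0 : xi j != 0 by rewrite gt_eqF.
case: (a j : nat) => [|k] /=; first by rewrite muln0 !mul0r mulr0n mulr0.
have -> : (2 * k.+1)%:R / 2 = k.+1%:R :> R.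
  by rewrite natrM mulrAC divff ?pnatr_eq0 // mul1r.
by rewrite -mulr_natr exprS; field.
Qed.

Lemma coefRes_zzbar_resonant l h k : etaZ l = 0 -> piZ v l + h - k = 0 ->
  wsq v l + sqnorm h - sqnorm k = 0 -> coefRes v xi q l [:: h] [:: k] None = c0 xi q l.
Proof.
move=> eta p w.
rewrite (@coefRes_shift _ _ _ v xi q l [:: h] [:: k] None) ?big_seq1 ?eta //.
rewrite /c0 mulr_sumr; apply: eq_big => al; first by rewrite subn1.
by move=> _; rewrite res_term_None // !mnomE_seq1 natrX; ring.
Qed.

Lemma coefRes_zz_resonant l h k : (0 < q)%N -> h != k -> etaZ l = -2 ->
  piZ v l + h + k = 0 -> wsq v l + sqnorm h + sqnorm k = 0 ->
  coefRes v xi q l [:: h; k] [::] None = cm2 xi q l.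
Proof.
case: q => [//|r] _ hk eta p w.
rewrite (@coefRes_shift _ _ _ v xi r.+1 l [:: h; k] [::] None);
  rewrite ?big_cons ?big_nil ?subr0 ?addr0 ?addrA ?eta //.
rewrite /cm2 mulr_sumr; apply: eq_big => al; first by rewrite /= !subSS subn0.
by move=> _; rewrite res_term_None // mnomE_nil mnomE_seq2 //=; ring.
Qed.

Lemma coefRes_zzbar l h k : (0 < m)%N ->
  coefRes v xi q l [:: h] [:: k] None =
  (if (l == 0) && (h == k) then (q.+1 ^ 2)%:R * Apol xi q else 0)
  + (if Xq0 q l && P0 v l h k then c0 xi q l else 0).
Proof.
move=> m_gt0.
case: (boolP (Xq0 q l && P0 v l h k)) =>
    [/andP [/andP [Xl /eqP eta] /andP [/eqP p /eqP w]] | not_res].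
  have /negbTE -> : l != 0 by case/and4P: Xl.
  by rewrite add0r coefRes_zzbar_resonant.
rewrite addr0; case: (eqVneq l 0) => [-> | l0].
  case: (eqVneq h k) => [<- | hk] /=.
    by rewrite coefRes_zzbar_resonant ?c0_0 ?etaZ0 ?piZ0 ?wsq0 ?add0r ?subrr.
  apply: coefRes_eq0 => a /res_support_balance [_ _ p _]; move/eqP: p.
  by rewrite !big_seq1 piZ0 add0r subr_eq0 (negbTE hk).
apply: coefRes_eq0 => a ra; apply: (negP not_res).
have [eta _ p w] := res_support_balance ra.
rewrite !big_seq1 in p w; rewrite /= subrr in eta.
rewrite /Xq0 /Xq /P0 p w eta !eqxx l0 (res_support_signed m_gt0 ra) //= !andbT.
apply/forallP => i; apply/eqP => lE; move: eta.
by rewrite lE etaZN mulr2n etaZD etaZ_unitv.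
Qed.

Hypothesis Xqm2_nondegenerate : forall l : mi m,
  Xqm2 q l -> 2 * wsq v l + sqnorm (piZ v l) <> 0.

Lemma coefRes_zz l h k : (0 < q)%N -> (0 < m)%N -> inSc v k ->
  coefRes v xi q l [:: h; k] [::] None =
  if Xqm2 q l && Pm2 v l h k then cm2 xi q l else 0.
Proof.
move=> q_gt0 m_gt0 [_ k_notin_S].
case: (boolP (Xqm2 q l && Pm2 v l h k)) => [/andP [Xl /andP [/eqP p /eqP w]] | not_res].
  have hk : h != k.
    apply/eqP => hk; apply: (Xqm2_nondegenerate Xl); move: p w; rewrite -hk => p w.
    have -> : piZ v l = - (h + h) by apply/eqP; rewrite -addr_eq0 addrA p.
    have -> : wsq v l = - (sqnorm h + sqnorm h) by apply/eqP; rewrite -addr_eq0 addrA w.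
    by rewrite sqnormN sqnorm_double; ring.
  by move: Xl => /andP [_ /eqP eta]; rewrite coefRes_zz_resonant.
apply: coefRes_eq0 => a ra; apply: (negP not_res).
have [eta _ p w] := res_support_balance ra.
rewrite !big_cons !big_nil /= !subr0 !addr0 !addrA in p w eta.
rewrite /Xqm2 /Xq /Pm2 p w eta !eqxx (res_support_signed m_gt0 ra) //= !andbT.
apply/andP; split; first by apply/eqP => l0; move: eta; rewrite l0 etaZ0.
apply/forallP => i; apply/eqP => lE.
have piZl : piZ v l = - (v i + v i) by rewrite lE piZN mulr2n piZD piZ_unitv.
have wsql : wsq v l = - (sqnorm (v i) + sqnorm (v i)).
  by rewrite lE wsqN mulr2n wsqD wsq_unitv.
apply: (k_notin_S i); apply: (sqnorm_midpoint (k := h)); rewrite addrC.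
  by move/eqP: p; rewrite piZl -addrA addrC addr_eq0 opprK => /eqP.
by move/eqP: w; rewrite wsql -addrA addrC addr_eq0 opprK => /eqP.
Qed.

End Coefficients.

Theorem mainTheorem5 (R : rcfType) (n q m : nat)
    (v : 'I_m -> 'rV[int]_n) (xi : 'I_m -> R) :
  (0 < n)%N -> (0 < q)%N -> (0 < m)%N ->
  injective v ->
  (forall i, 0 < xi i) ->
  (* (1) *)
  (forall nn : mi m, etaZ nn = 0 -> (1 < l1norm nn <= 2 * q + 2)%N ->
     piZ v nn <> 0) ->
  (* (2) *)
  (forall nn : mi m, etaZ nn = 1 -> (1 < l1norm nn <= 2 * q + 1)%N ->
     sqnorm (piZ v nn) - wsq v nn <> 0) ->
  (* (3) *)
  (forall u : mi m,
     (Xq q u \/ exists l1 l2 : mi m, [/\ Xq q l1, Xq q l2, l1 <> l2 &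
                                       u = l1 + l2 \/ u = l1 - l2]) ->
     piZ v u <> 0) ->
  (* (4) *)
  (forall l : mi m, Xqm2 q l -> 2 * wsq v l + sqnorm (piZ v l) <> 0) ->
  (* degree 0: only the mode-0 constant const(xi) survives *)
      (forall l : mi m, l <> 0 -> coefH v xi q l [::] [::] None = 0) /\
      (* y_j e^{i(l,x)} *)
      (forall (l : mi m) (j : 'I_m),
         coefH v xi q l [::] [::] (Some j) =
         if l == 0 then (q.+1 ^ 2)%:R * Apol xi q + omega v xi q j else 0) /\
      (* degree exactly 1 in w vanishes *)
      (forall (l : mi m) h, inSc v h ->
         coefH v xi q l [:: h] [::] None = 0 /\
         coefH v xi q l [::] [:: h] None = 0) /\
      (* z_h zbar_k e^{i(l,x)} *)
      (forall (l : mi m) h k, inSc v h -> inSc v k ->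
         coefH v xi q l [:: h] [:: k] None =
         (if (l == 0) && (h == k)
          then (q.+1 ^ 2)%:R * Apol xi q + (sqnorm h)%:~R else 0)
         + (if Xq0 q l && P0 v l h k then c0 xi q l else 0)) /\
      (* z_h z_k e^{i(l,x)} *)
      (forall (l : mi m) h k, inSc v h -> inSc v k ->
         coefH v xi q l [:: h; k] [::] None =
         if Xqm2 q l && Pm2 v l h k then cm2 xi q l else 0) /\
      (* zbar_h zbar_k e^{i(l,x)} *)
      (forall (l : mi m) h k, inSc v h -> inSc v k ->
         coefH v xi q l [::] [:: h; k] None =
         if Xqm2 q (- l) && Pm2 v (- l) h k then cm2 xi q (- l) else 0).
Proof.
move=> _ q_gt0 m_gt0 _ xi_gt0 cond1 cond2 _ cond4.
have coefQuad_off l ea eb yj : l != 0 -> coefQuad v xi l ea eb yj = 0.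
  by move=> l0; rewrite /coefQuad (negbTE l0).
split; [|split; [|split; [|split; [|split]]]].
- move=> l l0; rewrite /coefH coefQuad_off; last exact/eqP.
  by rewrite (coefRes_const xi cond1) // add0r.
- move=> l j; rewrite /coefH; case: eqVneq => [-> | l0].
    by rewrite /coefQuad eqxx (coefRes_y q v xi_gt0) /omega; ring.
  by rewrite coefQuad_off // (coefRes_const xi cond1) ?add0r //; apply/eqP.
- move=> l h hS; rewrite /coefH; have [-> ->] := coefRes_linear xi cond2 l None hS.
  by rewrite /coefQuad !addr0; case: (l == 0).
- move=> l h k _ _; rewrite /coefH (coefRes_zzbar q v xi_gt0) // /coefQuad.
  by case: (l == 0); case: (h == k) => /=; ring.
- move=> l h k _ kS; rewrite /coefH (coefRes_zz xi_gt0 cond4) // /coefQuad.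
  by case: (l == 0); rewrite add0r.
- move=> l h k _ kS; rewrite /coefH coefRes_opp (coefRes_zz xi_gt0 cond4) // /coefQuad.
  by case: (l == 0); rewrite add0r.
Qed.
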